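(* The linear map $\varphi$ maps $\Sigma(B_n)$ into $\Sigma(A_{n-1})$ and, for every $J\subseteq\{0,1,\dots,n-1\}$, $$\varphi(Y_J)=\sum_{F\in\mathcal{F}_n,\ F\subseteq J\,\triangle\,(J+1)}2^{\#F}\,P_F.$$
   Context: $B_n$: signed permutations $w=w_1\dots w_n$, values ordered $\cdots<-2<-1<1<2<\cdots$, $w_0=0$; $\mathrm{Des}(w)=\{i\in\{0,\dots,n-1\}:w_i>w_{i+1}\}$; $Y_J=\sum_{\mathrm{Des}(w)=J}w\in\mathbb{Q}B_n$; $\Sigma(B_n)=\mathrm{span}\{Y_J\}$. $\Sigma(A_{n-1})\subseteq\mathbb{Q}\mathfrak{S}_n$ is the span of $\sum_{\mathrm{Des}(u)=J}u$, $J\subseteq[n-1]$, where $\mathrm{Des}(u)=\{i\in[n-1]:u_i>u_{i+1}\}$. $\varphi:\mathbb{Q}B_n\to\mathbb{Q}\mathfrak{S}_n$ is the linear extension of $w\mapsto|w_1|\dots|w_n|$. For $u\in\mathfrak{S}_n$, $\mathrm{Peak}(u)=\{i\in[n-1]:u_{i-1}<u_i>u_{i+1}\}$ with $u_0=0$; $\mathcal{F}_n$ is the set of subsets of $[n-1]$ with no two consecutive integers; $P_F=\sum_{\mathrm{Peak}(u)=F}u$. $J+1=\{j+1:j\in J\}$ and $\triangle$ is symmetric difference. *)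

From HB Require Import structures.
From mathcomp Require Import all_boot all_order all_fingroup all_algebra.
Set Implicit Arguments. Unset Strict Implicit. Unset Printing Implicit Defensive.
Import Order.TTheory GRing.Theory Num.Theory.
Local Open Scope ring_scope.

(* Positions 0..n are encoded as 'I_n.+1; subsets of {0,..,n} as {set 'I_n.+1}. *)

(* Signed permutations of [n]: w = (s, e); the entry in position i (1 <= i <= n)
   is w_i = (-1)^(e (i-1)) * (s (i-1) + 1); w_0 = 0. *)
Definition Bn (n : nat) : finType := ({perm 'I_n} * {ffun 'I_n -> bool})%type.

Definition wval (n : nat) (w : Bn n) (k : nat) : int :=
  match k with
  | 0 => 0
  | k'.+1 => match @insub nat (fun m => m < n)%N _ k' with
             | Some i => (if w.2 i then -1 else 1) * ((w.1 i).+1 : int)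
             | None => 0
             end
  end.

(* Permutations of [n]: u_i = u (i-1) + 1 for 1 <= i <= n, u_0 = 0. *)
Definition uval (n : nat) (u : 'S_n) (k : nat) : nat :=
  match k with
  | 0 => 0%N
  | k'.+1 => match @insub nat (fun m => m < n)%N _ k' with
             | Some i => (u i).+1
             | None => 0%N
             end
  end.

Definition DesB (n : nat) (w : Bn n) : {set 'I_n.+1} :=
  [set i : 'I_n.+1 | (i < n)%N && (wval w (i.+1) < wval w i)].

Definition DesA (n : nat) (u : 'S_n) : {set 'I_n.+1} :=
  [set i : 'I_n.+1 | [&& (0 < i)%N, (i < n)%N & (uval u i.+1 < uval u i)%N]].

Definition Peak (n : nat) (u : 'S_n) : {set 'I_n.+1} :=
  [set i : 'I_n.+1 | [&& (0 < i)%N, (i < n)%N,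
                         (uval u i.-1 < uval u i)%N & (uval u i.+1 < uval u i)%N]].

Definition setB (n : nat) : {set 'I_n.+1} := [set i : 'I_n.+1 | (i < n)%N].
Definition setA (n : nat) : {set 'I_n.+1} := [set i : 'I_n.+1 | (0 < i < n)%N].

Definition inFn (n : nat) (F : {set 'I_n.+1}) : bool :=
  (F \subset setA n) &&
  [forall i : 'I_n.+1, forall j : 'I_n.+1, (i \in F) ==> (j \in F) ==> (j != i.+1 :> nat)].

Definition shift1 (n : nat) (J : {set 'I_n.+1}) : {set 'I_n.+1} :=
  [set j : 'I_n.+1 | [exists i in J, j == i.+1 :> nat]].
Definition symdiff (T : finType) (A B : {set T}) : {set T} := (A :\: B) :|: (B :\: A).

(* Group algebras Q B_n and Q S_n as formal linear combinations. *)
Definition YB (n : nat) (J : {set 'I_n.+1}) : {ffun Bn n -> rat} :=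
  [ffun w => (DesB w == J)%:R].
Definition YA (n : nat) (J : {set 'I_n.+1}) : {ffun 'S_n -> rat} :=
  [ffun u => (DesA u == J)%:R].
Definition PF (n : nat) (F : {set 'I_n.+1}) : {ffun 'S_n -> rat} :=
  [ffun u => (Peak u == F)%:R].

Definition scl (T : finType) (a : rat) (f : {ffun T -> rat}) : {ffun T -> rat} :=
  [ffun t => a * f t].

Definition inSigmaB (n : nat) (x : {ffun Bn n -> rat}) : Prop :=
  exists c : {set 'I_n.+1} -> rat,
    x = \sum_(J : {set 'I_n.+1} | J \subset setB n) scl (c J) (YB J).
Definition inSigmaA (n : nat) (x : {ffun 'S_n -> rat}) : Prop :=
  exists c : {set 'I_n.+1} -> rat,
    x = \sum_(J : {set 'I_n.+1} | J \subset setA n) scl (c J) (YA J).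

(* phi : linear extension of w |-> |w_1| ... |w_n| *)
Definition phi (n : nat) (x : {ffun Bn n -> rat}) : {ffun 'S_n -> rat} :=
  [ffun u => \sum_(w : Bn n | w.1 == u) x w].

From HB Require Import structures.
From mathcomp Require Import all_boot all_order all_fingroup all_algebra.
From mathcomp Require Import zify.
Import Order.TTheory GRing.Theory Num.Theory.
Set Implicit Arguments. Unset Strict Implicit. Unset Printing Implicit Defensive.
Local Open Scope ring_scope.

(** Fix u in S_n; the signed permutations w with |w| = u are the 2^n sign
   vectors. Comparing w_i with w_{i+1}, only the sign of the entry of larger
   absolute value matters: if u_i < u_{i+1} then i is a descent of w iff
   w_{i+1} < 0, otherwise iff w_i > 0. So Des(w) = J is a system of constraints
   in which the sign of w_{m+1} is constrained by position m when u ascends at m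
   and by position m+1 when u descends at m+1. The signs are independent: a sign
   has 2 choices at a valley of u, is forced at a peak (consistently iff exactly
   one of m, m+1 lies in J, i.e. m+1 is in J (+) (J+1)), and is forced by one
   constraint otherwise. As valleys and peaks alternate (u_0 = 0 and the
   boundary positions are never descents) there are as many valleys as peaks,
   whence phi(Y_J)(u) = 2^#Peak(u) [Peak(u) in J (+) (J+1)]. This depends on u
   only through Peak(u), hence only through Des(u), so phi maps Sigma(B_n) into
   Sigma(A_{n-1}). *)

Lemma ltz_norm_cases (x y : int) : y != 0 -> (x == 0) || (`|x| != `|y|) ->
  (y < x) = if `|y| < `|x| then 0 <= x else y < 0.
Proof.
by move=> ? ?; case: (ltrP x 0); case: (ltrP y 0);
  case: (boolP (`|y| < `|x|)) => /=; lia.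
Qed.

Lemma prod_nat_bool (I : finType) (b : I -> bool) :
  \prod_(i : I) ((b i)%:R : rat) = [forall i, b i]%:R.
Proof.
have [b_all | /forallPn[i /negbTE bi]] := boolP [forall i, b i].
  by rewrite big1 // => i _; rewrite (forallP b_all).
by rewrite (bigD1 i) //= bi mul0r.
Qed.

Lemma prod_if2 (I : finType) (b : I -> bool) :
  (\prod_(i : I) (if b i then 2 else 1) = 2 ^ \sum_(i : I) b i)%N.
Proof. by rewrite expn_sum; apply: eq_bigr => i _; case: (b i). Qed.

Lemma sum_mul_eq_nat (T : finType) (P : pred T) (f : T -> rat) (t : T) :
  \sum_(x | P x) f x * (t == x)%:R = if P t then f t else 0.
Proof.
rewrite (bigID (pred1 t)) /= [X in _ + X]big1 ?addr0; last first.
  by move=> x /andP[_ /negbTE x_neq]; rewrite eq_sym x_neq mulr0.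
case: ifP => Pt.
  rewrite (big_pred1 t) ?eqxx ?mulr1 // => x /=.
  by case: (x =P t) => [->|_]; rewrite ?Pt ?andbF.
by rewrite big_pred0 // => x /=; case: (x =P t) => [->|_]; rewrite ?Pt ?andbF.
Qed.

Lemma count_falls_rises (D : nat -> bool) k :
  (\sum_(m < k) (D m && ~~ D m.+1) + D k = \sum_(m < k) (~~ D m && D m.+1) + D 0)%N.
Proof.
elim: k => [|k IH]; first by rewrite !big_ord0.
by rewrite !big_ord_recr /=; move: IH; case: (D k); case: (D k.+1) => /=; lia.
Qed.

(* With [D] the descents of |w|, [s] the signs of w and [j] the target set J,
   the left side is Des(w) = J position by position, the right side the same
   constraints regrouped by the sign [s m.+1] they involve. *)
Lemma forall_sign_constraints (n : nat) (D s j : nat -> bool) :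
  D 0 = false -> D n = false ->
  (forall i, (i < n)%N -> (if D i then ~~ s i else s i.+1) = j i) <->
  (forall m, (m < n)%N ->
     (D m || (s m.+1 == j m)) && (~~ D m.+1 || (s m.+1 == ~~ j m.+1))).
Proof.
move=> D0 Dn; split=> [H m m_lt | H i i_lt].
  apply/andP; split; first by case Dm: (D m) => //=; rewrite -(H m m_lt) Dm.
  case Dm1: (D m.+1) => //=.
  have m1_lt : (m.+1 < n)%N.
    by rewrite ltn_neqAle m_lt andbT; apply: contraTneq Dm1 => ->; rewrite Dn.
  by rewrite -(H _ m1_lt) Dm1 negbK.
case Di: (D i); last by have /andP[] := H i i_lt; rewrite Di => /eqP.
case: i i_lt Di => [|m] i_lt Di; first by rewrite D0 in Di.
have /andP[_] := H m (ltnW i_lt); rewrite Di => /eqP ->; exact: negbK.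
Qed.

Section SignedPermutations.
Variables (n : nat) (u : 'S_n).

Lemma uvalS (m : 'I_n) : uval u m.+1 = (u m).+1.
Proof. by rewrite /uval valK. Qed.

Lemma uval_out k : (n < k)%N -> uval u k = 0%N.
Proof. by case: k => // k k_gt; rewrite /uval insubF //; apply/negbTE; lia. Qed.

Lemma uval_gt0 k : (0 < k <= n)%N -> (0 < uval u k)%N.
Proof. by case: k => // k k_le; rewrite (uvalS (Ordinal k_le)). Qed.

Lemma uval_neqS k : (k < n)%N -> uval u k != uval u k.+1.
Proof.
case: k => [|k] k1_lt; first by rewrite eq_sym -lt0n uval_gt0.
have k_lt : (k < n)%N by lia.
rewrite (uvalS (Ordinal k_lt)) (uvalS (Ordinal k1_lt)) eqSS.
by apply/eqP => /val_inj/perm_inj/(congr1 val) /=; lia.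
Qed.

Definition udes m : bool := (m < n)%N && (uval u m.+1 < uval u m)%N.

(* [peak m] and [valley m] refer to position [m.+1], whose sign is [e m] below. *)
Definition peak m : bool := ~~ udes m && udes m.+1.
Definition valley m : bool := udes m && ~~ udes m.+1.

Lemma udes0 : udes 0 = false.
Proof. by rewrite /udes /= andbF. Qed.

Lemma udesn : udes n = false.
Proof. by rewrite /udes ltnn. Qed.

Lemma count_valley_peak : (\sum_(m < n) valley m = \sum_(m < n) peak m)%N.
Proof. by have := count_falls_rises udes n; rewrite udes0 udesn !addn0. Qed.

Variable e : {ffun 'I_n -> bool}.
Local Notation w := ((u, e) : Bn n).

Lemma wvalS (m : 'I_n) : wval w m.+1 = (if e m then -1 else 1) * (u m).+1%:Z.
Proof. by rewrite /wval valK. Qed.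

Lemma norm_wval k : `|wval w k| = (uval u k)%:Z.
Proof.
case: k => [|k] //; case: (ltnP k n) => [k_lt | k_ge].
  rewrite (wvalS (Ordinal k_lt)) (uvalS (Ordinal k_lt)).
  by case: (e _); rewrite ?mulN1r ?mul1r.
by rewrite /wval insubF ?uval_out //; apply/negbTE; lia.
Qed.

Lemma wvalS_lt0 (m : 'I_n) : (wval w m.+1 < 0) = e m.
Proof. by rewrite wvalS; case: (e m); rewrite ?mulN1r ?mul1r; lia. Qed.

Lemma wval_ltS i : (i < n)%N ->
  (wval w i.+1 < wval w i) =
  if udes i then ~~ (wval w i < 0) else wval w i.+1 < 0.
Proof.
move=> i_lt; rewrite /udes i_lt ltz_norm_cases.
- by rewrite !norm_wval ltz_nat -leNgt.
- by rewrite -normr_eq0 norm_wval; have := @uval_gt0 i.+1; lia.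
- by rewrite !norm_wval eqz_nat uval_neqS ?orbT.
Qed.

(* Only used for [k <= n], where [inord k] has value [k]. *)
Definition mem_nat (J : {set 'I_n.+1}) k : bool := inord k \in J.

Definition sign_ok (J : {set 'I_n.+1}) m b : bool :=
  (udes m || (b == mem_nat J m)) && (~~ udes m.+1 || (b == ~~ mem_nat J m.+1)).

Lemma DesB_eqE (J : {set 'I_n.+1}) : J \subset setB n ->
  (DesB w == J) = [forall m : 'I_n, sign_ok J m (e m)].
Proof.
move=> J_sub.
have constraints :=
  forall_sign_constraints (fun k => wval w k < 0) (mem_nat J) udes0 udesn.
apply/eqP/forallP => [DesJ m | H].
  rewrite /sign_ok -wvalS_lt0; apply: (proj1 constraints) (ltn_ord m) => i i_lt.
  by rewrite -wval_ltS // /mem_nat -DesJ /DesB inE inordK ?i_lt //; lia.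
apply/setP => i; rewrite /DesB inE; case: (ltnP i n) => [i_lt | i_ge] /=.
  rewrite wval_ltS // (proj2 constraints) ?/mem_nat ?inord_val // => m m_lt.
  by have := H (Ordinal m_lt); rewrite /sign_ok -wvalS_lt0.
by apply/esym/negbTE/negP => /(subsetP J_sub); rewrite inE; lia.
Qed.

End SignedPermutations.

Section PhiOfYB.
Variables (n : nat) (u : 'S_n).

Lemma phi_YB_prod (J : {set 'I_n.+1}) : J \subset setB n ->
  phi (YB J) u = \prod_(m : 'I_n) \sum_(b : bool) ((sign_ok u J m b)%:R : rat).
Proof.
move=> J_sub; rewrite ffunE bigA_distr_bigA /=.
rewrite (eq_bigl (fun w : Bn n => (w.1 == u) && true)) => [|w]; last by rewrite andbT.
rewrite (eq_bigr (fun w : Bn n => YB J (w.1, w.2))) => [|[]] //.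
rewrite -(pair_big (pred1 u) xpredT (fun v e => YB J (v, e))) /= big_pred1_eq.
by apply: eq_bigr => e _; rewrite prod_nat_bool ffunE DesB_eqE.
Qed.

Lemma sum_sign_ok (J : {set 'I_n.+1}) m :
  \sum_(b : bool) ((sign_ok u J m b)%:R : rat) =
  (if valley u m then 2 else 1)%:R * (peak u m ==> (mem_nat J m != mem_nat J m.+1))%:R.
Proof.
rewrite big_bool /= -natrD -natrM /sign_ok /valley /peak.
by case: (udes u m); case: (udes u m.+1); case: (mem_nat J m); case: (mem_nat J m.+1).
Qed.

Lemma in_Peak (i : 'I_n.+1) : (i \in Peak u) = (0 < i)%N && peak u i.-1.
Proof.
rewrite /Peak inE /peak /udes; case: i => [[|m] m_lt] //=.
case: (ltnP m.+1 n) => m1_lt /=; last by rewrite !andbF.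
have := uval_neqS u (ltnW m1_lt); rewrite (ltnW m1_lt) /=.
move: (uval u m) (uval u m.+1) (uval u m.+2) => a b c neq_ab.
by case: (c < b)%N; rewrite ?andbT ?andbF; lia.
Qed.

Lemma card_Peak : #|Peak u| = (\sum_(m < n) peak u m)%N.
Proof.
rewrite -sum1_card big_mkcond big_ord_recl /= in_Peak add0n.
by apply: eq_bigr => m _; rewrite in_Peak lift0 /=; case: (peak u m).
Qed.

Lemma inFn_Peak : inFn (Peak u).
Proof.
apply/andP; split.
  by apply/subsetP => i; rewrite /Peak /setA !inE => /and4P[-> -> _ _].
apply/forallP => i; apply/forallP => j; rewrite /Peak !inE.
apply/implyP => /and4P[_ _ _ i_des]; apply/implyP => /and4P[_ _ j_asc _].
by apply/eqP => j_eq; move: j_asc; rewrite j_eq succnK; move: i_des; lia.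
Qed.

Lemma in_shift1 (J : {set 'I_n.+1}) (i : 'I_n.+1) m :
  i = m.+1 :> nat -> (i \in shift1 J) = mem_nat J m.
Proof.
move=> i_eq; rewrite /shift1 inE /mem_nat.
have m_lt : (m < n.+1)%N by have := ltn_ord i; lia.
apply/existsP/idP => [[k /andP[k_in /eqP k_eq]] | m_in].
  by have -> : (inord m : 'I_n.+1) = k by apply: val_inj; rewrite /= inordK //; lia.
by exists (inord m); rewrite m_in /= inordK // i_eq.
Qed.

Lemma in_symdiff_shift1 (J : {set 'I_n.+1}) (i : 'I_n.+1) m :
  i = m.+1 :> nat -> (i \in symdiff J (shift1 J)) = (mem_nat J m != mem_nat J m.+1).
Proof.
move=> i_eq; rewrite in_setU !in_setD (in_shift1 J i_eq).
have -> : (i \in J) = mem_nat J m.+1 by rewrite /mem_nat -i_eq inord_val.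
by case: (mem_nat J m); case: (mem_nat J m.+1).
Qed.

Lemma Peak_sub_symdiff (J : {set 'I_n.+1}) :
  (Peak u \subset symdiff J (shift1 J)) =
  [forall m : 'I_n, peak u m ==> (mem_nat J m != mem_nat J m.+1)].
Proof.
apply/subsetP/forallP => [Peak_sub m | H i].
  apply/implyP => peak_m; rewrite -(in_symdiff_shift1 J (lift0 m)).
  by apply: Peak_sub; rewrite in_Peak lift0.
rewrite in_Peak => /andP[i_gt0 peak_i].
have i_lt : (i.-1 < n)%N by move: peak_i; rewrite /peak /udes; lia.
rewrite (in_symdiff_shift1 J (m := i.-1)); last by rewrite prednK.
exact: (implyP (H (Ordinal i_lt))).
Qed.

Definition peak_weight (J P : {set 'I_n.+1}) : rat :=
  if P \subset symdiff J (shift1 J) then (2 ^ #|P|)%:R else 0.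

Lemma phi_YB (J : {set 'I_n.+1}) : J \subset setB n ->
  phi (YB J) u = peak_weight J (Peak u).
Proof.
move=> J_sub.
rewrite phi_YB_prod // (eq_bigr _ (fun (m : 'I_n) _ => sum_sign_ok J m)).
rewrite big_split /= prod_nat_bool -natr_prod prod_if2 count_valley_peak.
by rewrite /peak_weight Peak_sub_symdiff card_Peak; case: [forall _, _];
  rewrite ?mulr1 ?mulr0.
Qed.

Lemma sum_PF_at (J : {set 'I_n.+1}) :
  (\sum_(F : {set 'I_n.+1} | inFn F && (F \subset symdiff J (shift1 J)))
     scl (2 ^ #|F|)%:R (PF F)) u = peak_weight J (Peak u).
Proof.
rewrite sum_ffunE
  (eq_bigr (fun F : {set 'I_n.+1} => (2 ^ #|F|)%:R * (Peak u == F)%:R)).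
  by rewrite sum_mul_eq_nat inFn_Peak /peak_weight; case: ifP.
by move=> F _; rewrite !ffunE.
Qed.

End PhiOfYB.

Definition peaks_of_des n (K : {set 'I_n.+1}) : {set 'I_n.+1} :=
  [set i | (i \in K) && (inord i.-1 \notin K)].

Lemma Peak_des n (u : 'S_n) : Peak u = peaks_of_des (DesA u).
Proof.
apply/setP => i; rewrite in_Peak /peaks_of_des /DesA !inE inordK; last first.
  by have := ltn_ord i; lia.
by case: (nat_of_ord i) => [|[|k]] //=; rewrite /peak ?udes0 // andbC.
Qed.

Lemma inSigmaA_DesA_fun n (f : {set 'I_n.+1} -> rat) :
  inSigmaA [ffun u : 'S_n => f (DesA u)].
Proof.
exists f; apply/ffunP => u; rewrite sum_ffunE ffunE.
rewrite (eq_bigr (fun K => f K * (DesA u == K)%:R)) => [|K _]; last by rewrite !ffunE.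
rewrite sum_mul_eq_nat ifT //.
by apply/subsetP => i; rewrite /DesA /setA !inE => /and3P[-> -> _].
Qed.

Lemma phi_sum_scl n (I : finType) (P : pred I) (c : I -> rat)
    (y : I -> {ffun Bn n -> rat}) (u : 'S_n) :
  phi (\sum_(i | P i) scl (c i) (y i)) u = \sum_(i | P i) c i * phi (y i) u.
Proof.
rewrite ffunE; under eq_bigr do rewrite sum_ffunE.
rewrite exchange_big; apply: eq_bigr => i _.
by rewrite ffunE mulr_sumr; apply: eq_bigr => w _; rewrite ffunE.
Qed.

Theorem proposition3p2 (n : nat) :
  (forall x : {ffun Bn n -> rat}, inSigmaB x -> inSigmaA (phi x)) /\
  (forall J : {set 'I_n.+1}, J \subset setB n ->
     phi (YB J) =
     \sum_(F : {set 'I_n.+1} | inFn F && (F \subset symdiff J (shift1 J)))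
        scl (2 ^ #|F|)%:R (PF F)).
Proof.
split=> [x [c ->] | J J_sub]; last by apply/ffunP => u; rewrite phi_YB // sum_PF_at.
pose g (K : {set 'I_n.+1}) :=
  \sum_(J : {set 'I_n.+1} | J \subset setB n) c J * peak_weight J (peaks_of_des K).
suff -> : phi (\sum_(J : {set 'I_n.+1} | J \subset setB n) scl (c J) (YB J)) =
          [ffun u => g (DesA u)].
  exact: inSigmaA_DesA_fun.
apply/ffunP => u; rewrite phi_sum_scl ffunE; apply: eq_bigr => J J_sub.
by rewrite phi_YB // Peak_des.
Qed.
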